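(* For $t>0$ and $0<v<1$ let $$L_v(t):=\frac{1}{\log t}\left(\frac{1-v}{v}\left(t-t^{1-v}\right)+\frac{v}{1-v}\left(t^{1-v}-1\right)\right)\quad (t\neq 1),\qquad L_v(1):=1.$$ Then for each fixed $t$ with $0<t\le 1$ the function $v\mapsto L_v(t)$ is increasing on $(0,1)$, and for each fixed $t\ge 1$ the function $v\mapsto L_v(t)$ is decreasing on $(0,1)$.
   Context: $L_v(t)$ is the representing function of the weighted logarithmic mean; the value at $t=1$ is its limit as $t\to1$. *)

From Stdlib Require Import Reals.
Open Scope R_scope.

Definition Lv (v t : R) : R :=
  if Req_EM_T t 1 then 1
  else / ln t * ((1 - v) / v * (t - Rpower t (1 - v))
                 + v / (1 - v) * (Rpower t (1 - v) - 1)).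

(* With s = ln t the numerator of L_v(t) is
     N(s, v) = (1-v)/v (e^s - e^((1-v)s)) + v/(1-v) (e^((1-v)s) - 1),
   and its v-derivative is -e^((1-v)s) ((1-v)^2 g(vs) + v^2 g(-(1-v)s)) / (v(1-v))^2,
   where g(x) = e^x - 1 - x > 0 for x <> 0.  So for s <> 0 the numerator strictly
   decreases in v, and dividing by ln t reverses or keeps the direction according to
   the sign of ln t. *)

From Stdlib Require Import Reals Lra.
From Coquelicot Require Import Coquelicot.
Open Scope R_scope.

Definition exp_gap (x : R) : R := exp x - 1 - x.

Lemma exp_gap_pos (x : R) : x <> 0 -> 0 < exp_gap x.
Proof. intros Hx; unfold exp_gap; pose proof (exp_ineq1 x Hx); lra. Qed.

Lemma exp_gap_nonneg (x : R) : 0 <= exp_gap x.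
Proof. unfold exp_gap; pose proof (exp_ineq1_le x); lra. Qed.

Definition Lv_num (s v : R) : R :=
  (1 - v) / v * (exp s - exp ((1 - v) * s))
  + v / (1 - v) * (exp ((1 - v) * s) - 1).

Definition Lv_num_dv (s v : R) : R :=
  - exp ((1 - v) * s)
    * ((1 - v) ^ 2 * exp_gap (v * s) + v ^ 2 * exp_gap (- ((1 - v) * s)))
    / (v ^ 2 * (1 - v) ^ 2).

Lemma is_derive_Lv_num (s v : R) :
  0 < v < 1 -> is_derive (Lv_num s) v (Lv_num_dv s v).
Proof.
  intros Hv; unfold Lv_num, Lv_num_dv, exp_gap.
  auto_derive; [repeat split; lra |].
  replace (exp s) with (exp ((1 - v) * s) * exp (v * s))
    by (rewrite <- exp_plus; f_equal; ring).
  replace (1 + - v) with (1 - v) by ring.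
  rewrite exp_Ropp.
  pose proof (exp_pos ((1 - v) * s)).
  field; repeat split; lra.
Qed.

Lemma Lv_num_dv_neg (s v : R) : s <> 0 -> 0 < v < 1 -> Lv_num_dv s v < 0.
Proof.
  intros Hs Hv; unfold Lv_num_dv.
  assert (Hvs : v * s <> 0) by (apply Rmult_integral_contrapositive; lra).
  pose proof (exp_gap_pos _ Hvs) as Hgap_pos.
  pose proof (exp_gap_nonneg (- ((1 - v) * s))) as Hgap_nonneg.
  assert (Hgaps : 0 < (1 - v) ^ 2 * exp_gap (v * s)
                      + v ^ 2 * exp_gap (- ((1 - v) * s))).
  { apply Rplus_lt_le_0_compat; [apply Rmult_lt_0_compat | apply Rmult_le_pos];
      try apply pow_lt; try apply pow2_ge_0; lra. }
  assert (Hden : 0 < v ^ 2 * (1 - v) ^ 2)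
    by (apply Rmult_lt_0_compat; apply pow_lt; lra).
  pose proof (exp_pos ((1 - v) * s)) as Hexp.
  unfold Rdiv; rewrite Ropp_mult_distr_l_reverse, Ropp_mult_distr_l_reverse.
  apply Ropp_lt_gt_0_contravar.
  apply Rmult_lt_0_compat; [apply Rmult_lt_0_compat; lra | now apply Rinv_0_lt_compat].
Qed.

Lemma Lv_num_strict_decreasing (s v1 v2 : R) :
  s <> 0 -> 0 < v1 -> v1 < v2 -> v2 < 1 -> Lv_num s v2 < Lv_num s v1.
Proof.
  intros Hs H1 H12 H2.
  apply Ropp_lt_cancel.
  apply (incr_function (fun v => - Lv_num s v) 0 1 (fun v => - Lv_num_dv s v));
    simpl; auto.
  - intros v Hv0 Hv1; apply (is_derive_opp (Lv_num s)), is_derive_Lv_num; lra.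
  - intros v Hv0 Hv1; pose proof (Lv_num_dv_neg s v Hs (conj Hv0 Hv1)); lra.
Qed.

Lemma Lv_1 (v : R) : Lv v 1 = 1.
Proof. unfold Lv; destruct (Req_EM_T 1 1); [reflexivity | contradiction]. Qed.

Lemma Lv_ln (v t : R) : 0 < t -> t <> 1 -> Lv v t = Lv_num (ln t) v / ln t.
Proof.
  intros Ht Ht1; unfold Lv, Lv_num, Rpower.
  destruct (Req_EM_T t 1) as [E | _]; [contradiction |].
  rewrite exp_ln by lra; unfold Rdiv at 3; ring.
Qed.

Lemma Lv_strict_increasing_lt1 (t v1 v2 : R) :
  0 < t < 1 -> 0 < v1 -> v1 < v2 -> v2 < 1 -> Lv v1 t < Lv v2 t.
Proof.
  intros Ht H1 H12 H2; rewrite !Lv_ln by lra.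
  assert (Hln : ln t < 0) by (rewrite <- ln_1; apply ln_increasing; lra).
  pose proof (Lv_num_strict_decreasing (ln t) v1 v2 ltac:(lra) H1 H12 H2).
  unfold Rdiv; rewrite !(Rmult_comm _ (/ ln t)).
  apply Rmult_lt_gt_compat_neg_l; [now apply Rinv_lt_0_compat | lra].
Qed.

Lemma Lv_strict_decreasing_gt1 (t v1 v2 : R) :
  1 < t -> 0 < v1 -> v1 < v2 -> v2 < 1 -> Lv v2 t < Lv v1 t.
Proof.
  intros Ht H1 H12 H2; rewrite !Lv_ln by lra.
  assert (Hln : 0 < ln t) by (rewrite <- ln_1; apply ln_increasing; lra).
  pose proof (Lv_num_strict_decreasing (ln t) v1 v2 ltac:(lra) H1 H12 H2).
  apply Rmult_lt_compat_r; [now apply Rinv_0_lt_compat | lra].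
Qed.

Theorem proposition2p7 :
  (forall t : R, 0 < t <= 1 ->
     forall v1 v2 : R, 0 < v1 < 1 -> 0 < v2 < 1 -> v1 <= v2 ->
       Lv v1 t <= Lv v2 t) /\
  (forall t : R, 1 <= t ->
     forall v1 v2 : R, 0 < v1 < 1 -> 0 < v2 < 1 -> v1 <= v2 ->
       Lv v2 t <= Lv v1 t).
Proof.
  split; intros t Ht v1 v2 H1 H2 H12.
  all: destruct (Req_dec t 1) as [-> | Ht1]; [rewrite !Lv_1; lra |].
  all: destruct (Rle_lt_or_eq_dec v1 v2 H12) as [Hlt | ->]; [left | lra].
  - apply Lv_strict_increasing_lt1; lra.
  - apply Lv_strict_decreasing_gt1; lra.
Qed.
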